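(* Let $n\ge3$, let $G_2=\overline{L(K_{2,n})}$, and let $G_1$ be a finite bipartite graph with bipartition $(X,Y)$ ($X,Y$ nonempty) such that some vertex is adjacent to all of $X$ and some vertex is adjacent to all of $Y$, and with $\Delta(G_1)\ge n$. If the two-squares graph does not embed in $G_1$, then $G_1$ and $G_2$ are $\mathcal{C}$-$\mathrm{HH}$-symmetric.
   Context: $\Delta$ denotes maximum degree. ''Embeds'' means is isomorphic to an induced subgraph. The two-squares graph is the $6$-cycle $v_1\dots v_6v_1$ with the single chord $v_3v_6$. $\overline{L(K_{2,n})}$ is the bipartite graph with parts $\{x_1,\dots,x_n\}$, $\{y_1,\dots,y_n\}$ and $x_i\sim y_j$ iff $i\ne j$. A homomorphism maps edges to edges. $G_1$ is $\mathcal{C}$-$\mathrm{HH}$-morphic to $G_2$ if every homomorphism from a finite connected induced subgraph $A$ of $G_1$ onto an induced subgraph $B$ of $G_2$ extends to a homomorphism $G_1\to G_2$; $G_1,G_2$ are $\mathcal{C}$-$\mathrm{HH}$-symmetric if each is $\mathcal{C}$-$\mathrm{HH}$-morphic to the other. *)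

From mathcomp Require Import all_boot.
Set Implicit Arguments. Unset Strict Implicit. Unset Printing Implicit Defensive.

Definition simple_graph (V : finType) (e : rel V) : Prop :=
  symmetric e /\ irreflexive e.

Definition induced_rel (V : finType) (e : rel V) (A : {set V}) : rel V :=
  [rel u v | [&& u \in A, v \in A & e u v]].

Definition connected_on (V : finType) (e : rel V) (A : {set V}) : Prop :=
  A != set0 /\ {in A &, forall x y, connect (induced_rel e A) x y}.

Definition hom_on (V1 V2 : finType) (e1 : rel V1) (e2 : rel V2)
  (A : {set V1}) (h : V1 -> V2) : Prop :=
  {in A &, forall x y, e1 x y -> e2 (h x) (h y)}.

Definition hom (V1 V2 : finType) (e1 : rel V1) (e2 : rel V2) (g : V1 -> V2) :
  Prop := forall x y, e1 x y -> e2 (g x) (g y).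

Definition C_HH_morphic (V1 V2 : finType) (e1 : rel V1) (e2 : rel V2) : Prop :=
  forall (A : {set V1}) (B : {set V2}) (h : V1 -> V2),
    connected_on e1 A -> hom_on e1 e2 A h -> h @: A = B ->
    exists g : V1 -> V2, hom e1 e2 g /\ {in A, forall x, g x = h x}.

Definition C_HH_symmetric (V1 V2 : finType) (e1 : rel V1) (e2 : rel V2) : Prop :=
  C_HH_morphic e1 e2 /\ C_HH_morphic e2 e1.

Definition bipartition (V : finType) (e : rel V) (X Y : {set V}) : Prop :=
  [/\ X != set0, Y != set0, [disjoint X & Y], X :|: Y = setT &
      forall x y, e x y -> (x \in X) && (y \in Y) || (x \in Y) && (y \in X)].

Definition degree (V : finType) (e : rel V) (v : V) : nat := #|[set w | e v w]|.

Definition max_degree_ge (V : finType) (e : rel V) (n : nat) : Prop :=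
  exists v, n <= degree e v.

(* two-squares graph: 6-cycle v1..v6 (indices 0..5) plus chord v3v6 (2--5) *)
Definition two_squares_rel : rel 'I_6 :=
  fun i j => let a := nat_of_ord i in let b := nat_of_ord j in
    [|| (b == (a + 1) %% 6), (a == (b + 1) %% 6), (a == 2) && (b == 5)
      | (a == 5) && (b == 2)].

Definition embeds (W V : finType) (f0 : rel W) (e : rel V) : Prop :=
  exists f : W -> V, injective f /\ forall i j, e (f i) (f j) = f0 i j.

(* complement of L(K_{2,n}): x_i = (false,i), y_j = (true,j), x_i ~ y_j iff i<>j *)
Definition coLK2n_rel (n : nat) : rel (bool * 'I_n) :=
  fun u v => (u.1 != v.1) && (u.2 != v.2).

From mathcomp Require Import all_boot.
Set Implicit Arguments. Unset Strict Implicit. Unset Printing Implicit Defensive.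

(* If two vertices on one side of G1 had incomparable neighbourhoods, a
   neighbour private to each of them together with the two dominating vertices
   would induce a two-squares graph; so the neighbourhoods on each side form a
   chain. Hence a connected induced subgraph A with an edge contains, on each
   side, a vertex adjacent to all of A on the other side, and sending every
   vertex outside A to the one of these two on its own side retracts G1 onto A:
   every homomorphism on A extends (a single vertex is handled by mapping G1
   onto an edge of G2). Conversely, a homomorphism from a connected A in the
   bipartite graph G2 to G1 respects the bipartitions up to one global swap,
   and the vertices of G2 outside A can be sent to the dominating vertex of the
   appropriate side of G1. *)

Definition bipartite_by (V : finType) (e : rel V) (P : {set V}) : Prop :=
  forall x y, e x y -> (x \in P) != (y \in P).

Definition nbhd (V : finType) (e : rel V) (v : V) : {set V} := [set w | e v w].

Section BipartiteBy.

Variables (V : finType) (e : rel V) (P : {set V}).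
Hypothesis bipP : bipartite_by e P.

Lemma bipartite_byC : bipartite_by e (~: P).
Proof. by move=> x y /bipP; rewrite !inE; case: (x \in P); case: (y \in P). Qed.

Lemma bipartite_by_same_side x y : (x \in P) = (y \in P) -> e x y = false.
Proof. by move=> Exy; apply/negP => /bipP; rewrite Exy eqxx. Qed.

Lemma dominator_notin v : {in P, forall x, e v x} -> v \notin P.
Proof. by move=> domv; apply/negP => vP; move: (bipP (domv v vP)); rewrite eqxx. Qed.

End BipartiteBy.

Lemma bipartition_bipartite_by (V : finType) (e : rel V) (X Y : {set V}) :
  bipartition e X Y -> bipartite_by e X /\ Y = ~: X.
Proof.
case=> _ _ disjXY coverXY sides; have EY : Y = ~: X.
  apply/setP => y; rewrite inE; have : y \in X :|: Y by rewrite coverXY inE.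
  by rewrite inE; case: (boolP (y \in X)) => [/(disjointFr disjXY)->|].
split=> // x y /sides; rewrite EY !inE.
by case: (x \in X); case: (y \in X).
Qed.

Lemma two_squares_twin_free (i j : 'I_6) :
  two_squares_rel i =1 two_squares_rel j -> i = j.
Proof.
move=> E; have row k (lt_k6 : k < 6) := E (Ordinal lt_k6).
case: i j E row => [[|[|[|[|[|[|//]]]]]] ?] [[|[|[|[|[|[|//]]]]]] ?] _ row;
  apply: val_inj => //=;
  by [move: (row 0 isT) | move: (row 1 isT) | move: (row 2 isT)
     | move: (row 3 isT) | move: (row 4 isT) | move: (row 5 isT)].
Qed.

Lemma induced_embedding_inj (W V : finType) (f0 : rel W) (e : rel V) (f : W -> V) :
  (forall i j, f0 i =1 f0 j -> i = j) ->
  (forall i j, e (f i) (f j) = f0 i j) -> injective f.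
Proof. by move=> twin_free Ef i j Eij; apply: twin_free => k; rewrite -!Ef Eij. Qed.

(* x1 q1 p q2 x2 q play the roles of v1 ... v6. *)
Lemma two_squares_embeds (V : finType) (e : rel V) (P : {set V})
    (x1 q1 p q2 x2 q : V) :
  simple_graph e -> bipartite_by e P ->
  x1 \in P -> p \in P -> x2 \in P -> q1 \notin P -> q2 \notin P -> q \notin P ->
  e x1 q1 -> e p q1 -> e p q2 -> e x2 q2 -> e x2 q -> e x1 q -> e p q ->
  ~~ e x1 q2 -> ~~ e x2 q1 ->
  embeds two_squares_rel e.
Proof.
move=> [e_sym e_irr] bipP x1P pP x2P /negbTE q1P /negbTE q2P /negbTE qP
  ? ? ? ? ? ? ? /negbTE ? /negbTE ?.
pose f (i : 'I_6) := nth q [:: x1; q1; p; q2; x2; q] i.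
have same_side := bipartite_by_same_side bipP.
have Ef i j : e (f i) (f j) = two_squares_rel i j.
  case: i j => [[|[|[|[|[|[|//]]]]]] ?] [[|[|[|[|[|[|//]]]]]] ?];
    rewrite /f /two_squares_rel /=;
    by [rewrite e_irr | rewrite same_side ?x1P ?pP ?x2P ?q1P ?q2P ?qP
       | | rewrite e_sym].
exists f; split=> //.
exact: induced_embedding_inj two_squares_twin_free Ef.
Qed.

Section TwoSquaresFree.

Variables (V : finType) (e : rel V) (P : {set V}) (p q : V).
Hypotheses (simple_e : simple_graph e) (bipP : bipartite_by e P).
Hypotheses (dom_p : {in ~: P, forall y, e p y}) (dom_q : {in P, forall x, e q x}).
Hypothesis two_squares_free : ~ embeds two_squares_rel e.

Lemma nbhd_nested : {in ~: P &, forall q1 q2,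
  nbhd e q1 \subset nbhd e q2 \/ nbhd e q2 \subset nbhd e q1}.
Proof.
have [e_sym _] := simple_e.
have other_side x y : e x y -> y \notin P -> x \in P.
  by move=> /bipP; case: (x \in P); case: (y \in P).
have dom_p' y : y \notin P -> e p y by move=> yP; apply: dom_p; rewrite inE.
move=> q1 q2 /[!inE] q1P q2P.
case: (boolP (nbhd e q1 \subset nbhd e q2)) => [|/subsetPn[x1]]; first by left.
rewrite !inE => e_q1x1 ne_q2x1; right; apply/subsetP => x2; rewrite !inE => e_q2x2.
apply/negPn/negP => ne_q1x2; apply: two_squares_free.
have x1P : x1 \in P by apply: other_side q1P; rewrite e_sym.
have x2P : x2 \in P by apply: other_side q2P; rewrite e_sym.
have pP : p \in P := other_side _ _ (dom_p' _ q1P) q1P.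
have qP : q \notin P by move/bipP: (dom_q x1P); rewrite x1P; case: (q \in P).
apply: (two_squares_embeds simple_e bipP x1P pP x2P q1P q2P qP);
  by [rewrite dom_p' | rewrite e_sym ?dom_q].
Qed.

End TwoSquaresFree.

Lemma max_nbhd_dominates (V : finType) (e : rel V) (P A : {set V}) (q0 : V) :
  symmetric e -> bipartite_by e P ->
  {in ~: P &, forall q1 q2,
    nbhd e q1 \subset nbhd e q2 \/ nbhd e q2 \subset nbhd e q1} ->
  {in A, forall x, exists2 y, y \in A & e x y} ->
  q0 \in A :&: ~: P ->
  exists2 qs, qs \in A :&: ~: P & {in A :&: P, forall x, e qs x}.
Proof.
move=> e_sym bipP nested A_nbr q0AP.
have [qs qsAP max_qs] :=
  @arg_maxnP _ q0 [pred y | y \in A :&: ~: P] (fun y => #|nbhd e y|) q0AP.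
exists qs => // x /setIP[xA xP].
have [y yA e_xy] := A_nbr x xA.
have yAP : y \in A :&: ~: P.
  by rewrite !inE yA; move: (bipP _ _ e_xy); rewrite xP; case: (y \in P).
have x_y : x \in nbhd e y by rewrite inE e_sym.
have qsP : qs \in ~: P by case/setIP: qsAP.
have yP : y \in ~: P by case/setIP: yAP.
case: (nested y qs yP qsP) => [/subsetP/(_ x x_y) | sub_qs_y]; first by rewrite inE.
suff E : nbhd e y = nbhd e qs by move: x_y; rewrite E inE.
by apply/eqP; rewrite eq_sym eqEcard sub_qs_y; exact: max_qs.
Qed.

Lemma connected_on_isolated (V : finType) (e : rel V) (A : {set V}) (x : V) :
  connected_on e A -> x \in A -> {in A, forall y, ~~ e x y} ->
  {in A, forall y, y = x}.
Proof.
move=> [_ connA] xA isol y yA.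
case/connectP: (connA x y xA yA) => [[|z s]] /=; first by move=> _ ->.
by case/andP=> /and3P[_ zA e_xz]; rewrite (negbTE (isol z zA)) in e_xz.
Qed.

Lemma connected_on_const (V : finType) (e : rel V) (A : {set V}) (c : pred V) :
  connected_on e A -> {in A &, forall x y, e x y -> c x = c y} ->
  {in A &, forall x y, c x = c y}.
Proof.
move=> [_ connA] c_edge x y xA yA.
apply: (closed_connect _ (connA x y xA yA)) => u v /and3P[uA vA e_uv].
exact: c_edge.
Qed.

Lemma hom_to_edge (V W : finType) (e : rel V) (f : rel W) (X : {set V}) (s t : W) :
  bipartite_by e X -> symmetric f -> f s t ->
  hom e f (fun u => if u \in X then s else t).
Proof.
by move=> bipX f_sym f_st u v /bipX; case: (u \in X); case: (v \in X); rewrite // f_sym.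
Qed.

Lemma hom_of_dominating_outside (W V : finType) (f : rel W) (e : rel V)
    (X : {set V}) (A : {set W}) (B : {set V}) (g : W -> V) :
  symmetric e -> (forall u, g u \in B) ->
  (forall u u', f u u' -> (g u \in X) != (g u' \in X)) ->
  {in ~: A, forall u, {in B, forall z, (z \in X) != (g u \in X) -> e (g u) z}} ->
  hom_on f e A g -> hom f e g.
Proof.
move=> e_sym gB g_sides dom_out g_hom u u' f_uu'.
have sides := g_sides u u' f_uu'.
case: (boolP (u \in A)) => uA; last by apply: dom_out; rewrite ?inE // eq_sym.
case: (boolP (u' \in A)) => u'A; first exact: g_hom.
by rewrite e_sym; apply: dom_out; rewrite ?inE.
Qed.

Lemma two_squares_free_retract (V : finType) (e : rel V) (X A : {set V}) (v w : V) :
  simple_graph e -> bipartite_by e X ->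
  {in X, forall x, e v x} -> {in ~: X, forall y, e w y} ->
  ~ embeds two_squares_rel e ->
  A != set0 -> {in A, forall x, exists2 y, y \in A & e x y} ->
  exists r : V -> V, [/\ hom e e r, forall u, r u \in A & {in A, forall u, r u = u}].
Proof.
move=> simple_e bipX dom_v dom_w free /set0Pn[a aA] A_nbr.
have [e_sym _] := simple_e.
have bipnX := bipartite_byC bipX.
have meets P : bipartite_by e P -> exists z, z \in A :&: P.
  move=> bipP; have [b bA e_ab] := A_nbr a aA.
  case: (boolP (a \in P)) => aP; first by exists a; rewrite inE aA.
  by exists b; rewrite inE bA; move: (bipP _ _ e_ab); rewrite (negbTE aP); case: (b \in P).
have [ys ysA dom_ys] : exists2 ys, ys \in A :&: ~: X & {in A :&: X, forall x, e ys x}.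
  have [y0 y0A] := meets _ bipnX.
  exact: max_nbhd_dominates e_sym bipX (nbhd_nested simple_e bipX dom_w dom_v free)
    A_nbr y0A.
have [x0 x0A] := meets _ bipX.
rewrite -[X]setCK in dom_v x0A.
have [xs xsA dom_xs] := max_nbhd_dominates e_sym bipnX
  (nbhd_nested simple_e bipnX dom_v dom_w free) A_nbr x0A.
rewrite setCK in xsA.
move: xsA ysA => /setIP[xsA xsX] /setIP[ysA] /[!inE] /negbTE ysX.
pose r u := if u \in A then u else if u \in X then xs else ys.
have rA u : r u \in A by rewrite /r; case: ifP => // _; case: ifP.
have r_side u : (r u \in X) = (u \in X).
  by rewrite /r; case: ifP => // _; case: ifP => _; rewrite ?xsX ?ysX.
exists r; split=> [||u uA] //; last by rewrite /r uA.
apply: (hom_of_dominating_outside (X := X) (A := A) (B := A)) => //.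
- by move=> u u'; rewrite !r_side; apply: bipX.
- move=> u /[!inE] /negbTE uA z zA; rewrite /r uA.
  by case: ifP => _ zX; [apply: dom_xs | apply: dom_ys];
    rewrite !inE zA //; move: zX; rewrite ?xsX ?ysX; case: (z \in X).
- by move=> x y xA yA; rewrite /r xA yA.
Qed.

Lemma two_squares_free_C_HH_morphic (V W : finType) (e : rel V) (f : rel W)
    (X : {set V}) :
  simple_graph e -> bipartite_by e X ->
  (exists v, {in X, forall x, e v x}) -> (exists w, {in ~: X, forall y, e w y}) ->
  ~ embeds two_squares_rel e ->
  symmetric f -> (forall s, exists t, f s t) ->
  C_HH_morphic e f.
Proof.
move=> simple_e bipX [v dom_v] [w dom_w] free f_sym f_nbr A _ h connA h_hom _.
have [/forall_inP A_nbr | ] := boolP [forall x in A, [exists y in A, e x y]].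
  have [|r [r_hom rA r_id]] :=
    two_squares_free_retract simple_e bipX dom_v dom_w free (proj1 connA).
    by move=> x /A_nbr /exists_inP.
  by exists (h \o r); split=> [x y /r_hom | x xA]; [apply: h_hom | rewrite /= r_id].
rewrite negb_forall_in => /exists_inP[a aA /exists_inPn isol].
have [t f_hat] := f_nbr (h a).
pose P := if a \in X then X else ~: X.
have bipP : bipartite_by e P by rewrite /P; case: ifP => _ //; apply: bipartite_byC.
have aP : a \in P by rewrite /P; case: ifP => [//|/negbT]; rewrite inE.
exists (fun u => if u \in P then h a else t); split; first exact: hom_to_edge.
by move=> u /(connected_on_isolated connA aA isol) ->; rewrite aP.
Qed.

Lemma C_HH_morphic_to_dominated (W V : finType) (f : rel W) (e : rel V)
    (S : {set W}) (X : {set V}) :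
  bipartite_by f S -> symmetric e -> bipartite_by e X ->
  (exists v, {in X, forall x, e v x}) -> (exists w, {in ~: X, forall y, e w y}) ->
  C_HH_morphic f e.
Proof.
move=> bipS e_sym bipX [v dom_v] [w dom_w] A _ h connA h_hom _.
have [a aA] := set0Pn _ (proj1 connA).
(* [(h u \in X) (+) (u \in S)] records whether h swaps the sides at u. *)
have h_side_const : {in A &, forall x y,
    (h x \in X) (+) (x \in S) = (h y \in X) (+) (y \in S)}.
  apply: (connected_on_const (c := [pred u | (h u \in X) (+) (u \in S)]) connA).
  move=> x y xA yA f_xy /=.
  move: (bipS _ _ f_xy) (bipX _ _ (h_hom x y xA yA f_xy)).
  by case: (x \in S); case: (y \in S); case: (h x \in X); case: (h y \in X).
pose k := (h a \in X) (+) (a \in S).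
have h_side : {in A, forall u, (h u \in X) = (u \in S) (+) k}.
  by move=> u uA; rewrite /k -(h_side_const u a uA aA); case: (u \in S); case: (h u \in X).
have wX : w \in X by move: (dominator_notin (bipartite_byC bipX) dom_w); rewrite inE negbK.
have /negbTE vX := dominator_notin bipX dom_v.
pose g u := if u \in A then h u else if (u \in S) (+) k then w else v.
have g_side u : (g u \in X) = (u \in S) (+) k.
  rewrite /g; case: ifP => [uA|_]; first exact: h_side.
  by case: ((u \in S) (+) k); rewrite ?wX ?vX.
exists g; split; last by move=> u uA; rewrite /g uA.
apply: (hom_of_dominating_outside (X := X) (A := A) (B := setT)) => //.
- by move=> u u' /bipS; rewrite !g_side; case: (u \in S); case: (u' \in S); case: (k).
- move=> u /[!inE] /negbTE uA z _; rewrite /g uA.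
  case: ifP => _ zX; [apply: dom_w | apply: dom_v]; move: zX;
    by rewrite ?inE ?wX ?vX; case: (z \in X).
- by move=> x y xA yA f_xy; rewrite /g xA yA; apply: h_hom.
Qed.

Lemma coLK2n_sym (n : nat) : symmetric (@coLK2n_rel n).
Proof. by move=> u v; rewrite /coLK2n_rel eq_sym (eq_sym u.2). Qed.

Lemma coLK2n_bipartite (n : nat) : bipartite_by (@coLK2n_rel n) [set u | u.1].
Proof. by move=> u v /andP[]; rewrite !inE. Qed.

Lemma coLK2n_has_nbr (n : nat) : 1 < n -> forall s, exists t, @coLK2n_rel n s t.
Proof.
move=> n_gt1 [b i].
have /card_gt0P[j] : 0 < #|[set~ i]| by rewrite cardsC1 card_ord -ltnS (ltn_predK n_gt1).
by rewrite !inE => ji; exists (~~ b, j); rewrite /coLK2n_rel /= (eq_sym i) ji; case: b.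
Qed.

Theorem corollary6p7 (n : nat) (V : finType) (e : rel V) (X Y : {set V}) :
  3 <= n ->
  simple_graph e ->
  bipartition e X Y ->
  (exists v, {in X, forall x, e v x}) ->
  (exists v, {in Y, forall y, e v y}) ->
  max_degree_ge e n ->
  ~ embeds two_squares_rel e ->
  C_HH_symmetric e (@coLK2n_rel n).
Proof.
move=> n_ge3 simple_e /bipartition_bipartite_by[bipX ->] dom_X dom_Y _ free; split.
  apply: two_squares_free_C_HH_morphic simple_e bipX dom_X dom_Y free _ _.
    exact: coLK2n_sym.
  by apply: coLK2n_has_nbr; apply: ltn_trans n_ge3.
have [e_sym _] := simple_e.
exact: C_HH_morphic_to_dominated (@coLK2n_bipartite n) e_sym bipX dom_X dom_Y.
Qed.
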